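(* Let $m,n\in\mathbb{N}$ and let $\psi:\mathbb{F}[X]^m\to\{k^r:r\in\mathbb{Z}\}\cup\{0\}$ satisfy $\psi(\mathbf{q})\le1$ for all $\mathbf{q}$ and $\psi(\mathbf{q})>0$ for infinitely many $\mathbf{q}$. Then $$\min\{\delta(\psi),n\}\ge\min\{\eta(\psi),n\}.$$
   Context: $\mathbb{F}$ is a finite field with $k$ elements; for $\mathbf{q}\in\mathbb{F}[X]^m$, $|\mathbf{q}|_\infty=\max_i k^{\deg q_i}$. $\eta(\psi)=\inf\{\eta\in\mathbb{R}:\sum_{\mathbf{q}\in\mathbb{F}[X]^m\setminus\{0\}}|\mathbf{q}|_\infty^n(\psi(\mathbf{q})/|\mathbf{q}|_\infty)^\eta<\infty\}$. For $N>0$ and $v>0$: $C(N,v;\psi)=\#\{\mathbf{q}\in\mathbb{F}[X]^m\setminus\{0\}:|\mathbf{q}|_\infty\le N,\ \psi(\mathbf{q})\ge|\mathbf{q}|_\infty^{-v}\}$; when $C(N,v;\psi)\to\infty$, $\gamma(v;\psi)=\sup\{\gamma\in\mathbb{R}:\limsup_{N\to\infty}C(N,v;\psi)N^{-\gamma}>0\}$; $\delta(v;\psi)=\frac{n+\gamma(v;\psi)}{v+1}$ if $C(N,v;\psi)\to\infty$ as $N\to\infty$, and $\delta(v;\psi)=0$ otherwise; $\delta(\psi)=\sup_{v\ge0}\delta(v;\psi)$. *)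

From HB Require Import structures.
From mathcomp Require Import all_boot all_order all_algebra all_field.
From mathcomp Require Import all_classical all_reals all_analysis.
Set Implicit Arguments. Unset Strict Implicit. Unset Printing Implicit Defensive.
Import Order.TTheory GRing.Theory Num.Theory.
Import numFieldNormedType.Exports.
Local Open Scope classical_set_scope.
Local Open Scope ring_scope.

Definition polyvec (F : finFieldType) (m : nat) := {ffun 'I_m -> {poly F}}.

(* |q|_oo = max_i k^{deg q_i}, with k = #|F| and k^{deg 0} = k^{-oo} = 0 *)
Definition qnorm (F : finFieldType) (m : nat) (q : polyvec F m) : nat := (
  \max_(i < m) (if q i == 0%R then 0%N else (#|F| ^ (size (q i)).-1)%N))%N.

Section defs.
Variables (R : realType) (F : finFieldType) (m n : nat) (psi : polyvec F m -> R).
Local Open Scope ereal_scope.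

Definition nzvec : set (polyvec F m) := [set q : polyvec F m | q != 0%R].

Definition eta_psi : \bar R :=
  ereal_inf [set e%:E | e in [set e : R |
    \esum_(q in nzvec) (((qnorm q)%:R ^+ n * powR (psi q / (qnorm q)%:R) e)%R)%:E
      < +oo]].

Definition Ccount (N v : R) : \bar R :=
  \esum_(q in [set q : polyvec F m | q != 0%R /\ ((qnorm q)%:R <= N)%R /\
                      (powR (qnorm q)%:R (- v) <= psi q)%R]) 1.

Definition Ccount_to_infty (v : R) : Prop :=
  forall M : R, \forall N \near +oo%R, M%:E <= Ccount N v.

Definition gamma_psi (v : R) : \bar R :=
  ereal_sup [set g%:E | g in [set g : R |
    0 < limf_esup (fun N : R => Ccount N v * (powR N (- g))%:E) (+oo%R : set_system R)]].

Definition delta_v (v : R) : \bar R :=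
  if `[< Ccount_to_infty v >] then (n%:R%:E + gamma_psi v) * ((v + 1)^-1)%:E
  else 0.

Definition delta_psi : \bar R := ereal_sup [set delta_v v | v in [set v : R | (0 <= v)%R]].
End defs.

From HB Require Import structures.
From mathcomp Require Import all_boot all_order all_algebra all_field.
From mathcomp Require Import finmap.
From mathcomp Require Import all_classical all_reals all_analysis.
From mathcomp Require Import lra.
Import Order.TTheory GRing.Theory Num.Theory.
Import numFieldNormedType.Exports.
Local Open Scope classical_set_scope.
Local Open Scope ring_scope.

(* It suffices that [delta(psi) < s' < s] forces the convergence of
   [sum_q |q|^n (psi q / |q|)^s], hence [eta(psi) <= s].
   Cut the exponent range [0, w_J] into a grid [w_j = j h]; on the level set
   [|q|^(-w_j) <= psi q <= |q|^(h - w_j)] the summand is at most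
   [|q|^(n + (h - w_j) s - s)], while [delta(w_j) < s'] gives
   [C(N, w_j) = O(N^g)] with [g < s' (w_j + 1) - n] (unless the level is
   finite, in which case there is nothing to prove).  Grouping the [q] into
   the shells [|q| = k^d] turns each level sum into a convergent geometric
   series; the remaining [q] with [psi q < |q|^(-w_J)] are handled in the same
   way with the trivial count [k^(m (d+1))] of a shell. *)

Section esum_bounds.
Context {R : realType} {T : choiceType}.
Local Open Scope ereal_scope.
Implicit Types (A B : set T) (f : T -> \bar R).

Lemma esum_le_subset A B f : A `<=` B -> (forall x, B x -> 0 <= f x) ->
  \esum_(x in A) f x <= \esum_(x in B) f x.
Proof.
move=> AB f0; rewrite esum_mkcond [X in _ <= X]esum_mkcond; apply: le_esum => x _.
case: ifPn => xA; first by rewrite ifT // inE; apply: AB; rewrite -inE.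
by case: ifPn => // xB; apply: f0; rewrite -inE.
Qed.

Lemma esum1_fset (B : {fset T}) : \esum_(x in [set` B]) (1 : \bar R) = (#|` B|%:R)%:E.
Proof.
rewrite esum_fset // fsbig_finite //= set_fsetK.
by rewrite -sum1_size natr_sum sumEFin.
Qed.

Lemma esum_cst_le A (x y : R) : (0 <= x)%R ->
  \esum_(i in A) 1 <= y%:E -> \esum_(i in A) x%:E <= (x * y)%:E.
Proof.
move=> x0 Ay; apply: ge_ereal_sup => _ [X [finX XA] <-].
have : \sum_(i \in X) (1 : \bar R) <= y%:E.
  by apply: le_trans Ay; apply: ereal_sup_ubound; exists X.
rewrite !fsbig_finite //=; set s := finmap.enum_fset _.
have sum_cst (z : R) : \sum_(i <- s) z%:E = ((z * (size s)%:R)%R)%:E.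
  by rewrite sumEFin big_const_seq count_predT iter_addr_0 mulr_natr.
by rewrite !sum_cst mul1r !lee_fin; exact: ler_wpM2l.
Qed.

Lemma esum_finite_lt_pinfty A (f : T -> R) : finite_set A ->
  (forall x, 0 <= f x)%R -> \esum_(x in A) (f x)%:E < +oo.
Proof.
move=> Afin f0; rewrite esum_fset // => [|x _]; last by rewrite lee_fin.
by rewrite fsbig_finite //= sumEFin ltry.
Qed.

Lemma esum_cover_lt_pinfty A B (C : nat -> set T) (K : nat) f :
  (forall x, 0 <= f x) -> A `<=` B `|` \bigcup_(j in `I_K) C j ->
  \esum_(x in B) f x < +oo -> (forall j, (j < K)%N -> \esum_(x in C j) f x < +oo) ->
  \esum_(x in A) f x < +oo.
Proof.
move=> f0 ABC Bfin Cfin.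
pose restr (D : set T) x := if x \in D then f x else 0.
have restr0 D x : 0 <= restr D x by rewrite /restr; case: ifP.
apply: (@le_lt_trans _ _ (\esum_(x in A) (restr B x + \sum_(j < K) restr (C j) x))).
  apply: le_esum => x /ABC [Bx | [j /= jK Cjx]].
    by rewrite {1}/restr mem_set // leeDl // sume_ge0.
  rewrite (bigD1 (Ordinal jK)) //= addeCA {1}/restr mem_set //.
  by rewrite leeDl // adde_ge0 // sume_ge0.
apply: (@le_lt_trans _ _ (\esum_(x in setT) (restr B x + \sum_(j < K) restr (C j) x))).
  by apply: esum_le_subset => // x _; rewrite adde_ge0 // sume_ge0.
rewrite esumD => [||x _]; last 2 first.
- by move=> x _.
- by rewrite sume_ge0.
rewrite esum_sum => [|x j _ _]; last exact: restr0.
rewrite -esum_mkcond; apply: lte_add_pinfty => //.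
by apply: lte_sum_pinfty => j _; rewrite -esum_mkcond; exact: Cfin.
Qed.

(* Partition [A] into the shells [r x = d]: shell [d] contributes at most
   [c * (a * b) ^+ d], a convergent geometric series. *)
Lemma esum_shells_lt_pinfty A (r : T -> nat) f (a b c : R) :
  (forall x, 0 <= f x) -> (forall x, A x -> f x <= (b ^+ r x)%:E) ->
  (forall d, \esum_(x in A `&` [set x | r x = d]) 1 <= (c * a ^+ d)%:E) ->
  (0 < a)%R -> (0 < b)%R -> (a * b < 1)%R -> (0 <= c)%R ->
  \esum_(x in A) f x < +oo.
Proof.
move=> f0 fb cnt a0 b0 ab1 c0.
have ab0 : (0 < a * b)%R by rewrite mulr_gt0.
have term0 d : 0 <= (c * (a * b) ^+ d)%:E.
  by rewrite lee_fin mulr_ge0 // exprn_ge0 // ltW.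
have -> : A = \bigcup_(d in setT) (A `&` [set x | r x = d]).
  by apply/seteqP; split => [x Ax|x [d _ []] //]; exists (r x).
rewrite esum_bigcupT //; last by move=> i j _ _ [x [[_ <-] [_ <-]]].
apply: (@le_lt_trans _ _ (\esum_(d in [set: nat]) (c * (a * b) ^+ d)%:E)).
  apply: le_esum => d _.
  apply: (@le_trans _ _ (\esum_(x in A `&` [set x | r x = d]) (b ^+ d)%:E)).
    by apply: le_esum => x [Ax <-]; exact: fb.
  apply: le_trans (esum_cst_le _ _ _ (exprn_ge0 d (ltW b0)) (cnt d)) _.
  by rewrite lee_fin exprMn mulrCA [(b ^+ d * _)%R]mulrC.
rewrite -nneseries_esumT //; apply: (@le_lt_trans _ _ ((c / (1 - a * b))%:E)); last exact: ltry.
apply: lime_le; first by apply: is_cvg_nneseries => *; exact: term0.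
apply: nearW => N; rewrite sumEFin lee_fin.
by have := geometric_le_lim N c0 ab0; rewrite gtr0_norm //; apply.
Qed.

Lemma esum1_le_card (X : finType) (A : set X) :
  \esum_(x in A) (1 : \bar R) <= (#|X|%:R)%:E.
Proof.
rewrite esum_fset //; last exact: finite_finset.
rewrite fsbig_finite //=; set s := finmap.enum_fset _.
have -> : \sum_(x <- s) (1 : \bar R) = ((size s)%:R)%:E.
  by rewrite -sum1_size natr_sum sumEFin.
by rewrite lee_fin ler_nat -(card_uniqP (finmap.fset_uniq _)) max_card.
Qed.

End esum_bounds.

Lemma powR_lt1 {R : realType} (a x : R) : 1 < a -> x < 0 -> powR a x < 1.
Proof.
move=> a1 x0; rewrite /powR gt_eqF ?(lt_trans ltr01) // expR_lt1.
by rewrite nmulr_rlt0 // ln_gt0.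
Qed.

Lemma powR_ge1 {R : realType} (a x : R) : 1 <= a -> 0 <= x -> 1 <= powR a x.
Proof. by move=> a1 x0; rewrite -(powRr0 a); apply: ler_powR. Qed.

Lemma powR_exprn {R : realType} (a x : R) d : 0 <= a -> powR (a ^+ d) x = powR a x ^+ d.
Proof. by move=> a0; rewrite -powR_mulrn // powRAC powR_mulrn // powR_ge0. Qed.

Lemma min_le_min_of_approx {R : realType} (d e : \bar R) (c : R) : (0 <= d)%E ->
  (forall s' s : R, 0 < s' -> s' < s -> (d < s'%:E)%E -> (e <= s%:E)%E) ->
  (Order.min e c%:E <= Order.min d c%:E)%E.
Proof.
move=> d0 de; rewrite le_min !ge_min lexx orbT andbT.
have [_|dc] := leP c%:E d; first by rewrite orbT.
apply/orP; left; move: d d0 dc de => [x| |] // x0 xc de.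
rewrite lee_fin in x0; apply/lee_addgt0Pr => eps eps0; rewrite -EFinD.
by apply: (de (x + eps / 2)); rewrite ?lte_fin; lra.
Qed.

Section polyvec_norm.
Context {F : finFieldType} {m : nat}.
Local Notation k := #|F|.
Implicit Types q : polyvec F m.

Local Notation qnorm_entry q :=
  (fun i => if q i == 0 then 0%N else (k ^ (size (q i)).-1)%N) (only parsing).

Definition qdeg q : nat := trunc_log k (qnorm q).

Lemma polyvec_neq0 q : q != 0 -> exists i, q i != 0.
Proof.
move=> q0; apply/existsP; apply: contraNT q0; rewrite negb_exists => /forallP qi0.
by apply/eqP/ffunP => i; rewrite ffunE; apply/eqP; move/negPn: (qi0 i).
Qed.

Lemma qnorm_gt0 q : q != 0 -> (0 < qnorm q)%N.
Proof.
move=> /polyvec_neq0 [i qi0]; rewrite /qnorm.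
apply: leq_trans _ (@leq_bigmax _ (qnorm_entry q) i).
by rewrite (negPf qi0) expn_gt0 ltnW // finNzRing_gt1.
Qed.

Lemma qnormE q : q != 0 -> qnorm q = (k ^ qdeg q)%N.
Proof.
move=> q0; have qpos := qnorm_gt0 _ q0; have [i _] := polyvec_neq0 _ q0.
have m0 : (0 < #|'I_m|)%N by apply/card_gt0P; exists i.
have [j qnorm_j] := @bigop.eq_bigmax _ (qnorm_entry q) m0.
move: qpos; rewrite /qdeg /qnorm qnorm_j; case: eqP => // _ _.
by rewrite trunc_expnK // finNzRing_gt1.
Qed.

Lemma size_le_qnorm q d i : (qnorm q <= k ^ d)%N -> (size (q i) <= d.+1)%N.
Proof.
move=> qd; have [->|qi0] := eqVneq (q i) 0; first by rewrite size_poly0.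
have := leq_trans (@leq_bigmax _ (qnorm_entry q) i) qd.
by rewrite (negPf qi0) leq_exp2l ?finNzRing_gt1 // -ltnS; apply: leq_trans; rewrite leqSpred.
Qed.

Lemma esum1_qnorm_le (R : realType) d :
  (\esum_(q in [set q : polyvec F m | (qnorm q <= k ^ d)%N]) (1 : \bar R) <=
   ((k ^ (d.+1 * m))%:R)%:E)%E.
Proof.
pose to_polyvec (x : {ffun 'I_m -> 'rV[F]_(d.+1)}) : polyvec F m := [ffun i => rVpoly (x i)].
apply: (le_trans (esum_le_subset _ (to_polyvec @` setT) _ _ _)).
- move=> q /= qd; exists [ffun i => poly_rV (q i)] => //.
  by apply/ffunP => i; rewrite !ffunE poly_rV_K // size_le_qnorm.
- by move=> *; exact: lee01.
rewrite esum_image => [|x y _ _ /ffunP xy]; last first.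
  apply/ffunP => i; move: (xy i); rewrite !ffunE.
  by move=> /(congr1 (@poly_rV _ d.+1)); rewrite !rVpolyK.
apply: le_trans (esum1_le_card _ _) _.
by rewrite card_ffun card_mx card_ord mul1n -expnM.
Qed.

End polyvec_norm.

Section counting_function.
Context {R : realType} {F : finFieldType} {m n : nat} {psi : polyvec F m -> R}.
Local Notation qn q := ((qnorm q)%:R : R).
Local Open Scope ereal_scope.

Definition Cset (N v : R) := [set q : polyvec F m |
  q != 0%R /\ (qn q <= N)%R /\ (powR (qn q) (- v) <= psi q)%R].

Lemma Ccount_ge_subset (A : set (polyvec F m)) N v :
  A `<=` Cset N v -> \esum_(q in A) 1 <= Ccount psi N v.
Proof. by move=> ACset; apply: esum_le_subset => // *; exact: lee01. Qed.

Lemma Ccount_le N N' v : (N <= N')%R -> Ccount psi N v <= Ccount psi N' v.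
Proof.
move=> NN'; apply: Ccount_ge_subset => q [q0 [qN qv]].
by split => //; split => //; exact: le_trans NN'.
Qed.

Lemma Ccount_to_infty_infinite v :
  infinite_set [set q : polyvec F m | q != 0%R /\ (powR (qn q) (- v) <= psi q)%R] ->
  Ccount_to_infty psi v.
Proof.
move=> Ainf M; have [B BA HB] := infinite_set_fset (Num.truncn `|M|).+1 Ainf.
pose NB := (\max_(q <- finmap.enum_fset B) qnorm q)%N.
exists NB%:R; split; first exact: realn.
move=> N NBN; apply: le_trans (Ccount_ge_subset [set` B] N v _).
  rewrite esum1_fset lee_fin; apply: le_trans (ler_norm M) _; apply: ltW.
  by apply: lt_le_trans (truncnS_gt _) _; rewrite ler_nat.
move=> q /= qB; have [q0 qv] := BA q qB; split => //; split => //.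
apply/ltW/le_lt_trans/NBN; rewrite ler_nat.
exact: (@leq_bigmax_seq _ _ xpredT (fun q => qnorm q) q).
Qed.

Lemma gamma_psi_ge0 v : Ccount_to_infty psi v -> 0 <= gamma_psi psi v.
Proof.
move=> Cinf; apply: ereal_sup_ubound; exists 0%R => //=.
under eq_fun do rewrite oppr0 powRr0 mule1.
apply: (lt_le_trans lte01); apply: le_ereal_inf_tmp => _ [V [M [_ MV]] <-].
have [M' [_ M'C]] := Cinf 1%R.
pose x := (Num.max M M' + 1)%R.
have xM : (M < x)%R by rewrite /x ltr_pwDr // le_max lexx.
have xM' : (M' < x)%R by rewrite /x ltr_pwDr // le_max lexx orbT.
apply: le_trans (M'C _ xM') _; apply: ereal_sup_ubound; exists x => //; exact: MV.
Qed.

Lemma delta_v_ge0 v : (0 <= v)%R -> 0 <= delta_v n psi v.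
Proof.
move=> v0; rewrite /delta_v; case: asboolP => // Cinf.
by rewrite mule_ge0 ?adde_ge0 ?gamma_psi_ge0 // lee_fin invr_ge0 addr_ge0.
Qed.

Lemma Ccount_le_pow_near v g : gamma_psi psi v < g%:E ->
  exists M : R, forall N, (Num.max M 0 < N)%R -> Ccount psi N v <= (powR N g)%:E.
Proof.
move=> gamma_g.
have : limf_esup (fun N => Ccount psi N v * (powR N (- g))%:E) +oo%R < 1.
  rewrite (le_lt_trans _ lte01) // leNgt; apply/negP => limsup_gt0.
  suff : g%:E <= gamma_psi psi v by rewrite leNgt gamma_g.
  by apply: ereal_sup_ubound; exists g.
move=> /ereal_inf_lt [_ [V [M [_ MV]] <-]] supV; exists M => N.
rewrite gt_max => /andP [MN N0]; have Ng0 := powR_gt0 g N0.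
have : Ccount psi N v * (powR N (- g))%:E < 1.
  by apply: le_lt_trans supV; apply: ereal_sup_ubound; exists N => //; exact: MV.
apply: contraTle => /ltW gC; rewrite -(@mulfV _ (powR N g)) ?gt_eqF // -powRN EFinM.
by rewrite -leNgt lee_wpmul2r // lee_fin powR_ge0.
Qed.

Lemma Ccount_le_pow v g : (0 <= g)%R -> gamma_psi psi v < g%:E ->
  exists2 c : R, (1 <= c)%R & forall N, (1 <= N)%R -> Ccount psi N v <= (c * powR N g)%:E.
Proof.
move=> g0 /Ccount_le_pow_near [M CM]; pose N1 := (Num.max M 0 + 1)%R.
have MN1 : (Num.max M 0 < N1)%R by rewrite ltrDl.
have N1_ge1 : (1 <= N1)%R by rewrite lerDr le_max lexx orbT.
exists (powR N1 g) => [|N N_ge1]; first exact: powR_ge1.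
have Ng_ge1 := powR_ge1 _ _ N_ge1 g0.
have [MN|NM] := ltP (Num.max M 0%R) N.
  by apply: le_trans (CM N MN) _; rewrite lee_fin ler_peMl // ?powR_ge0 // powR_ge1.
apply: le_trans (Ccount_le _ _ v (ltW (le_lt_trans NM MN1))) _.
by apply: le_trans (CM _ MN1) _; rewrite lee_fin ler_peMr // powR_ge0.
Qed.

Lemma Ccount_poly_bound v b : (0 <= v)%R -> Ccount_to_infty psi v ->
  delta_v n psi v < b%:E ->
  exists g c : R, [/\ (0 <= g)%R, (g < b * (v + 1) - n%:R)%R, (1 <= c)%R &
     forall N, (1 <= N)%R -> Ccount psi N v <= (c * powR N g)%:E].
Proof.
move=> v0 Cinf; rewrite /delta_v asboolT //.
have v1 : (0 < v + 1)%R by rewrite ltr_wpDl.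
have := gamma_psi_ge0 _ Cinf; case E : (gamma_psi psi v) => [gam | |] // gam0; last first.
  by rewrite addey // mulyr gtr0_sg ?invr_gt0 // mul1e ltNge leey.
rewrite lee_fin in gam0; rewrite -EFinD -EFinM lte_fin ltr_pdivrMr // -ltrBrDl => gam_lt.
have [gam_g g_lt] := midf_lt gam_lt; set g := (_ / 2)%R in gam_g g_lt.
have g0 : (0 <= g)%R := le_trans gam0 (ltW gam_g).
have gamma_g : gamma_psi psi v < g%:E by rewrite E lte_fin.
have [c c1 Cc] := Ccount_le_pow _ _ g0 gamma_g.
by exists g, c.
Qed.

End counting_function.

Section eta_series.
Variables (R : realType) (F : finFieldType) (m n : nat) (psi : polyvec F m -> R).
Hypothesis psi_ge0 : forall q, 0 <= psi q.
Hypothesis psi_le1 : forall q, psi q <= 1.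
Local Notation qn q := ((qnorm q)%:R : R).
Local Notation kR := (#|F|%:R : R).
Implicit Types q : polyvec F m.

Definition eta_term (s : R) q : R := qn q ^+ n * powR (psi q / qn q) s.

Lemma kR_gt1 : 1 < kR. Proof. by rewrite ltr1n finNzRing_gt1. Qed.

Lemma qnE q : q != 0 -> qn q = kR ^+ qdeg q.
Proof. by move=> /qnormE ->; rewrite natrX. Qed.

Lemma qn_gt0 q : q != 0 -> 0 < qn q.
Proof. by move=> /qnorm_gt0; rewrite ltr0n. Qed.

Lemma eta_term_ge0 s q : 0 <= eta_term s q.
Proof. by rewrite mulr_ge0 ?exprn_ge0 ?powR_ge0. Qed.

Lemma eta_term_le s e q : 0 <= s -> q != 0 -> psi q <= powR (qn q) e ->
  eta_term s q <= powR (qn q) (n%:R + e * s - s).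
Proof.
move=> s0 q0 psi_e; have qn0 := qn_gt0 _ q0.
rewrite /eta_term powRM // ?invr_ge0 ?(ltW qn0) // -(powR_inv1 (ltW qn0)) -powRrM mulN1r.
rewrite !powRD ?(gt_eqF qn0) ?implybT // powR_mulrn ?(ltW qn0) // mulrA.
rewrite ler_wpM2r ?powR_ge0 // ler_wpM2l ?exprn_ge0 ?(ltW qn0) //.
by rewrite powRrM ge0_ler_powR ?nnegrE ?powR_ge0.
Qed.

Lemma eta_psi_le s :
  (\esum_(q in @nzvec F m) (eta_term s q)%:E < +oo)%E -> (eta_psi n psi <= s%:E)%E.
Proof. by move=> fin; apply: ereal_inf_lbound; exists s. Qed.

Lemma eta_series_piece_lt_pinfty (A : set (polyvec F m)) s e g c :
  0 <= s -> 0 <= c -> g + (n%:R + e * s - s) < 0 ->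
  (forall q, A q -> q != 0 /\ psi q <= powR (qn q) e) ->
  (forall d, \esum_(q in A `&` [set q | qdeg q = d]) 1 <= (c * powR kR g ^+ d)%:E)%E ->
  (\esum_(q in A) (eta_term s q)%:E < +oo)%E.
Proof.
move=> s0 c0 exp_lt0 Ae cnt.
have kR0 : 0 < kR by apply: lt_trans kR_gt1.
apply: (esum_shells_lt_pinfty _ qdeg _ (powR kR g) (powR kR (n%:R + e * s - s)) c) => //.
- by move=> q; rewrite lee_fin eta_term_ge0.
- move=> q /Ae [q0 psi_e]; rewrite lee_fin -powR_exprn ?(ltW kR0) // -qnE //.
  exact: eta_term_le.
- exact: powR_gt0.
- exact: powR_gt0.
- by rewrite -powRD ?(gt_eqF kR0) ?implybT //; exact: powR_lt1 _ _ kR_gt1 exp_lt0.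
Qed.

Section below_threshold.
Variables s' s : R.
Hypotheses (s'_gt0 : 0 < s') (s'_lt_s : s' < s).
Hypothesis delta_v_lt : forall v, 0 <= v -> (delta_v n psi v < s'%:E)%E.

(* [h s = s - s'] is the loss in the exponent from rounding [psi q] to the
   grid, and [J (s - s') > m + n] makes the shell count [k^(m (d+1))]
   affordable below [w J]. *)
Let h := (s - s') / s.
Let J := (Num.truncn ((m + n)%:R / (s - s'))).+1.
Let w (j : nat) := j%:R * h.

Let s_gt0 : 0 < s. Proof. exact: lt_trans s'_lt_s. Qed.
Let h_gt0 : 0 < h. Proof. by rewrite divr_gt0 // subr_gt0. Qed.
Let hs : h * s = s - s'. Proof. by rewrite mulfVK // gt_eqF. Qed.
Let w_ge0 j : 0 <= w j. Proof. by rewrite mulr_ge0 // ltW. Qed.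

Let level j := [set q | q != 0 /\ powR (qn q) (- w j) <= psi q /\ psi q <= powR (qn q) (h - w j)].
Let tail := [set q | q != 0 /\ psi q < powR (qn q) (- w J)].

Lemma nzvec_cover : @nzvec F m `<=` tail `|` \bigcup_(j in `I_J.+1) level j.
Proof.
move=> q q0; have [|tail_q] := ltP (psi q) (powR (qn q) (- w J)); first by left.
have q_ge1 : 1 <= qn q by rewrite ler1n qnorm_gt0.
have [j j_ok j_min] := ex_minnP (ex_intro (fun j => powR (qn q) (- w j) <= psi q) J tail_q).
right; exists j; first exact: j_min.
split=> //; split=> //; case: j j_ok j_min => [_ _|j _ j_min].
  by rewrite /w mul0r subr0; apply: le_trans (psi_le1 q) (powR_ge1 _ _ q_ge1 (ltW h_gt0)).
have : ~~ (powR (qn q) (- w j) <= psi q) by apply/negP => /j_min; rewrite ltnn.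
by rewrite -ltNge /w -natr1 mulrDl mul1r opprD addrCA subrr addr0 => /ltW.
Qed.

Lemma level_lt_pinfty j : (\esum_(q in level j) (eta_term s q)%:E < +oo)%E.
Proof.
have [fin|inf] := pselect (finite_set [set q | q != 0 /\ powR (qn q) (- w j) <= psi q]).
  apply: esum_finite_lt_pinfty (sub_finite_set _ fin) (eta_term_ge0 s).
  by move=> q [q0 [lo _]].
have [g [c [g0 g_lt c1 Cc]]] :=
  Ccount_poly_bound _ _ (w_ge0 j) (Ccount_to_infty_infinite _ inf) (delta_v_lt _ (w_ge0 j)).
apply: (eta_series_piece_lt_pinfty _ _ (h - w j) g c) => //.
- by rewrite ltW.
- exact: le_trans ler01 c1.
- have : s' * w j <= s * w j by rewrite ler_wpM2r // ltW.
  by move: g_lt; rewrite mulrBl hs; lra.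
- by move=> q [q0 [_ hi]].
move=> d; rewrite -powR_exprn ?(ltW (lt_trans ltr01 kR_gt1)) //.
apply: le_trans (Cc _ (exprn_ege1 d (ltW kR_gt1))); apply: Ccount_ge_subset.
by move=> q [[q0 [lo _]] <-]; split=> //; rewrite -qnE.
Qed.

Lemma tail_lt_pinfty : (\esum_(q in tail) (eta_term s q)%:E < +oo)%E.
Proof.
have kR0 : 0 < kR by apply: lt_trans kR_gt1.
apply: (eta_series_piece_lt_pinfty _ _ (- w J) m%:R (kR ^+ m)).
- exact: ltW s_gt0.
- by rewrite exprn_ge0 // ltW.
- have : (m + n)%:R < J%:R * (s - s') by rewrite -ltr_pdivrMr ?subr_gt0 // truncnS_gt.
  rewrite /w mulNr -mulrA hs natrD; move: (J%:R * _) => x; have := s_gt0; lra.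
- by move=> q [q0 /ltW].
move=> d; apply: le_trans (esum_le_subset _ [set q | (qnorm q <= #|F| ^ d)%N] _ _ _) _.
- by move=> q [[q0 _] <-]; rewrite /= qnormE.
- by move=> *; exact: lee01.
apply: le_trans (esum1_qnorm_le _ _) _.
by rewrite lee_fin powR_mulrn ?(ltW kR0) // -exprM -exprD natrX mulSn mulnC.
Qed.

Lemma eta_series_lt_pinfty :
  (\esum_(q in @nzvec F m) (eta_term s q)%:E < +oo)%E.
Proof.
apply: esum_cover_lt_pinfty nzvec_cover tail_lt_pinfty _ => [q|j _].
  by rewrite lee_fin eta_term_ge0.
exact: level_lt_pinfty.
Qed.

End below_threshold.
End eta_series.

Theorem lemma13 (R : realType) (F : finFieldType) (m n : nat)
  (psi : polyvec F m -> R)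
  (Hval : forall q, psi q = 0 \/ exists r : int, psi q = (#|F|%:R : R) ^ r)
  (Hle1 : forall q, psi q <= 1)
  (Hinf : infinite_set [set q | 0 < psi q]) :
  (Order.min (delta_psi n psi) n%:R%:E >= Order.min (eta_psi n psi) n%:R%:E)%E.
Proof.
have psi_ge0 q : 0 <= psi q by case: (Hval q) => [->|[r ->]] //; rewrite exprz_ge0.
have delta_le v : 0 <= v -> (delta_v n psi v <= delta_psi n psi)%E.
  by move=> v0; apply: ereal_sup_ubound; exists v.
apply: min_le_min_of_approx.
  exact: le_trans (delta_v_ge0 _ (lexx 0)) (delta_le _ (lexx 0)).
move=> s' s s'_gt0 s'_lt_s delta_lt; apply: eta_psi_le.
apply: (eta_series_lt_pinfty _ _ _ _ _ psi_ge0 Hle1 _ _ s'_gt0 s'_lt_s) => v v0.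
exact: le_lt_trans (delta_le v v0) delta_lt.
Qed.
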